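(* Let $k$ be a field, $G$ an ordered abelian group, $K=k((G))$ with canonical valuation $v$, and $D$ a derivation on $K$ whose field of constants is $k$, such that $v$ is a differential valuation with respect to $D$. Let $S\subseteq K$ be the additive subgroup of power series without constant term (i.e. $c_0=0$). If $(K,D)$ admits asymptotic integration, then for every $b\in K$ there is a unique $s\in S$ with $Ds=b$; that is, $D|_S:S\to K$ is a bijective additive map.
   Context: For a field $k$ and ordered abelian group $G$, $k((G))$ is the field of formal sums $a=\sum_{g\in G}c_gt^g$ with $c_g\in k$ and well-ordered support $\mathrm{supp}(a)=\{g\mid c_g\neq0\}$; its canonical valuation is $va=\min\mathrm{supp}(a)$, $v0=\infty$. A derivation $D$ on a field $K$ is an additive map with $D(ab)=aDb+bDa$; its field of constants is $C=\{a\in K\mid Da=0\}$. A valuation $v$ of $K$ is a differential valuation (for $D$) if $v$ is trivial on $C$ and for all $a,b\in K$ with $va\ge0$, $vb>0$, $b\ne0$ one has $v\!\left(\frac{b\,Da}{Db}\right)>0$. $(K,D)$ admits asymptotic integration if for every $b\in K\setminus\{0\}$ there is $a\in K$ with $v(b-Da)>vb$. *)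

From HB Require Import structures.
From mathcomp Require Import all_boot all_order all_algebra.
From mathcomp Require Import boolp classical_sets fsbigop.
Set Implicit Arguments. Unset Strict Implicit. Unset Printing Implicit Defensive.
Import Order.TTheory GRing.Theory Num.Theory.
Local Open Scope classical_set_scope.
Local Open Scope ring_scope.

Record ordered_abelian_group (G : zmodType) (le : rel G) : Prop := {
  oag_refl : forall x, le x x;
  oag_antisym : forall x y, le x y -> le y x -> x = y;
  oag_trans : forall x y z, le x y -> le y z -> le x z;
  oag_total : forall x y, le x y \/ le y x;
  oag_add : forall x y z, le x y -> le (x + z) (y + z)
}.

Section Hahn.
Variables (k : fieldType) (G : zmodType) (le : rel G).

Definition glt (x y : G) : Prop := le x y /\ x <> y.

Definition supp (a : G -> k) : set G := [set g | a g <> 0].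

Definition well_ordered (A : set G) : Prop :=
  forall B, B `<=` A -> B !=set0 -> exists2 m, B m & forall x, B x -> le m x.

(* elements of k((G)) *)
Definition hahn (a : G -> k) : Prop := well_ordered (supp a).

Definition hzero : G -> k := fun _ => 0.
Definition hadd (a b : G -> k) : G -> k := fun g => a g + b g.
Definition hopp (a : G -> k) : G -> k := fun g => - a g.
(* Cauchy product: (ab)_g = sum_{h+h'=g} a_h b_h' (a finite sum for
   Hahn series) *)
Definition hmul (a b : G -> k) : G -> k :=
  fun g => \sum_(h \in supp a) (a h * b (g - h)).
Definition hconst (c : k) : G -> k := fun g => if g == 0 then c else 0.

(* canonical valuation: [is_val a g] means a <> 0 and v a = g *)
Definition is_val (a : G -> k) (g : G) : Prop :=
  a g <> 0 /\ forall h, a h <> 0 -> le g h.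
(* v a > g (true in particular when a = 0, v 0 = oo) *)
Definition val_gt (a : G -> k) (g : G) : Prop := forall h, a h <> 0 -> glt g h.
Definition val_ge (a : G -> k) (g : G) : Prop := forall h, a h <> 0 -> le g h.

Definition derivation (D : (G -> k) -> (G -> k)) : Prop :=
  (forall a, hahn a -> hahn (D a)) /\
  (forall a b, hahn a -> hahn b -> D (hadd a b) = hadd (D a) (D b)) /\
  (forall a b, hahn a -> hahn b ->
     D (hmul a b) = hadd (hmul a (D b)) (hmul b (D a))).

Definition constants_are_k (D : (G -> k) -> (G -> k)) : Prop :=
  forall a, hahn a -> (D a = hzero <-> exists c : k, a = hconst c).

(* v is a differential valuation for D:
   v trivial on the constants, and for va >= 0, vb > 0, b <> 0:
   v(b Da / Db) > 0, i.e. v(b Da) > v(Db). *)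
Definition differential_valuation (D : (G -> k) -> (G -> k)) : Prop :=
  (forall a, hahn a -> D a = hzero -> a <> hzero -> is_val a 0) /\
  (forall a b, hahn a -> hahn b -> val_ge a 0 -> val_gt b 0 -> b <> hzero ->
     forall g, is_val (D b) g -> val_gt (hmul b (D a)) g).

Definition asymptotic_integration (D : (G -> k) -> (G -> k)) : Prop :=
  forall b, hahn b -> b <> hzero ->
    exists2 a, hahn a & forall g, is_val b g -> val_gt (hadd b (hopp (D a))) g.

Definition no_const_term (s : G -> k) : Prop := hahn s /\ s 0 = 0.

End Hahn.

From mathcomp Require Import all_boot all_algebra.
From mathcomp Require Import boolp classical_sets fsbigop.
From mathcomp Require Import ring.
Set Implicit Arguments. Unset Strict Implicit. Unset Printing Implicit Defensive.
Import GRing.Theory.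
Local Open Scope classical_set_scope.
Local Open Scope ring_scope.

(* Write [t^g] for the monomial [hmono g] and [S] for the series without constant term.
   For [h > 0] and [v a >= 0] the differential-valuation axiom, applied to [t^h], gives
   [v (D a) > v (D t^h) - h]; combined with Leibniz's rule for [t^g t^h] this shows that
   [g |-> v (D t^g)] is strictly increasing on [G \ {0}] and that [v (D x) = v (D t^(v x))]
   whenever [v x <> 0]. Hence [D] is injective on [S], and [v (b - D s)] controls the
   coefficients of [s] in [S]: all [s] with [v (b - D s) > v (D t^g)] agree at every
   exponent [<= g]. Gluing these coefficients yields a well-ordered [s*] in [S] that is as
   accurate as any element of [S]. If [b - D s*] had valuation [beta], asymptotic
   integration would give [a] in [S] with [v (b - D s* - D a) > beta = v (D t^(v a))], so
   [s* + a], hence [s*], would be accurate beyond [beta]: a contradiction. *)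

Section OrderedGroup.
Variables (G : zmodType) (le : rel G) (HG : ordered_abelian_group le).
Local Notation lt := (glt le).

Lemma gle_refl x : le x x. Proof. exact: (oag_refl HG). Qed.

Lemma gle_trans y x z : le x y -> le y z -> le x z.
Proof. exact: (oag_trans HG). Qed.

Lemma gle_anti x y : le x y -> le y x -> x = y. Proof. exact: (oag_antisym HG). Qed.

Lemma gle_total x y : le x y \/ le y x. Proof. exact: (oag_total HG). Qed.

Lemma gle_add2r z x y : le (x + z) (y + z) <-> le x y.
Proof. by split=> [/(oag_add HG (- z))|/(oag_add HG z)] //; rewrite !addrK. Qed.

Lemma gle_add2l z x y : le (z + x) (z + y) <-> le x y.
Proof. by rewrite ![z + _]addrC gle_add2r. Qed.

Lemma gltW x y : lt x y -> le x y. Proof. by case. Qed.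

Lemma glt_irr x : ~ lt x x. Proof. by case. Qed.

Lemma glt_add2r z x y : lt (x + z) (y + z) <-> lt x y.
Proof.
rewrite /glt gle_add2r; split=> -[xy nxy]; split=> //; first by move=> exy; subst.
by move/addIr.
Qed.

Lemma glt_add2l z x y : lt (z + x) (z + y) <-> lt x y.
Proof. by rewrite ![z + _]addrC glt_add2r. Qed.

Lemma glt_le_trans y x z : lt x y -> le y z -> lt x z.
Proof.
move=> [xy nxy] yz; split; first exact: gle_trans yz.
by move=> zx; subst z; apply: nxy; apply: gle_anti.
Qed.

Lemma gle_lt_trans y x z : le x y -> lt y z -> lt x z.
Proof.
move=> xy [yz nyz]; split; first exact: gle_trans yz.
by move=> zx; subst z; apply: nyz; apply: gle_anti.
Qed.

Lemma glt_nge x y : lt x y -> ~ le y x.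
Proof. by move=> [xy nxy] yx; apply: nxy; apply: gle_anti. Qed.

Lemma gnge_lt x y : ~ le x y -> lt y x.
Proof.
by move=> nxy; case: (gle_total x y) => // yx; split=> // yx'; subst; apply: nxy.
Qed.

Lemma glt_subr0 x y : lt x y <-> lt 0 (y - x).
Proof. by rewrite -(glt_add2r (- x)) subrr. Qed.

Lemma gltr_addl x e : lt 0 e -> lt x (x + e).
Proof. by rewrite -(glt_add2l x) addr0. Qed.

Lemma gneq0_lt0 g : g != 0 -> lt 0 g \/ lt 0 (- g).
Proof.
move=> /eqP g0; case: (gle_total 0 g) => g_ge0; [left|right]; first by split=> // /esym.
split; first by rewrite -(gle_add2r g) addNr add0r.
by move=> /eqP; rewrite eq_sym oppr_eq0 => /eqP.
Qed.

End OrderedGroup.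

Section HahnSeries.
Variables (k : fieldType) (G : zmodType) (le : rel G) (HG : ordered_abelian_group le).
Local Notation lt := (glt le).
Local Notation hahn := (hahn le).
Local Notation well_ordered := (well_ordered le).
Local Notation is_val := (is_val le).
Local Notation val_gt := (val_gt le).
Local Notation val_ge := (val_ge le).
Local Notation hzero := (@hzero k G).
Local Notation no_const_term := (no_const_term le).
Implicit Types (a b f s : G -> k) (A B : set G).

Definition hmono (g : G) : G -> k := fun x => if x == g then 1 else 0.
Definition hshift f (d : G) : G -> k := fun y => f (y - d).

Lemma well_ordered_sub A B : A `<=` B -> well_ordered B -> well_ordered A.
Proof. by move=> AB wB C CA; apply: wB; apply: subset_trans AB. Qed.

Lemma well_ordered1 g : well_ordered [set g].
Proof. by move=> C Cg [x Cx]; exists x => // y /Cg ->; rewrite (Cg _ Cx) gle_refl. Qed.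

Lemma well_orderedU A B : well_ordered A -> well_ordered B -> well_ordered (A `|` B).
Proof.
move=> wA wB C CAB C0.
have [CA0|CA0] := pselect ((C `&` A) !=set0); last first.
  by apply: wB => // x Cx; case: (CAB x Cx) => // Ax; case: CA0; exists x.
have [mA [CmA _] minA] := wA _ (@subIsetr _ _ _) CA0.
have [CB0|CB0] := pselect ((C `&` B) !=set0); last first.
  exists mA => // x Cx; case: (CAB x Cx) => [Ax|Bx]; first exact: minA.
  by case: CB0; exists x.
have [mB [CmB _] minB] := wB _ (@subIsetr _ _ _) CB0.
have lower m : le m mA -> le m mB -> forall x, C x -> le m x.
  move=> mmA mmB x Cx; case: (CAB x Cx) => [Ax|Bx].
    exact: gle_trans mmA (minA _ _).
  exact: gle_trans mmB (minB _ _).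
case: (gle_total HG mA mB) => [mAB|mBA]; [exists mA|exists mB] => //.
  exact: lower (gle_refl HG _) mAB.
exact: lower mBA (gle_refl HG _).
Qed.

Lemma hahnD a b : hahn a -> hahn b -> hahn (hadd a b).
Proof.
move=> ha hb; apply: (well_ordered_sub _ (well_orderedU ha hb)) => x.
rewrite /supp /hadd /setU /=.
have [-> ab|a0] := eqVneq (a x) 0; last by left; apply/eqP.
by right=> b0; apply: ab; rewrite b0 addr0.
Qed.

Lemma hahnN a : hahn a -> hahn (hopp a).
Proof.
by apply: well_ordered_sub => x; rewrite /supp /hopp /= => + a0; rewrite a0 oppr0.
Qed.

Lemma hahnC (c : k) : hahn (hconst c).
Proof.
apply: (well_ordered_sub (B := [set 0])); last exact: well_ordered1.
by move=> x; rewrite /supp /hconst /=; case: eqP.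
Qed.

Lemma hahn_hmono g : hahn (hmono g).
Proof.
apply: (well_ordered_sub (B := [set g])); last exact: well_ordered1.
by move=> x; rewrite /supp /hmono /=; case: eqP.
Qed.

Lemma hahn_shift a d : hahn a -> hahn (hshift a d).
Proof.
move=> ha B Bs [x Bx].
have [_ [y By <-] miny] : exists2 m, [set y - d | y in B] m &
    forall z, [set y - d | y in B] z -> le m z.
  by apply: ha; [move=> _ [y By <-]; apply: Bs | exists (x - d), x].
by exists y => // z Bz; rewrite -(gle_add2r HG (- d)); apply: miny; exists z.
Qed.

Lemma hmono0 : hmono 0 = hconst 1.
Proof. by apply/funext => y; rewrite /hmono /hconst. Qed.

Lemma hmono_neq0 g : hmono g <> hzero.
Proof.
by move=> /(congr1 (fun f => f g)) /eqP; rewrite /hmono /hzero eqxx oner_eq0.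
Qed.

Lemma val_gt_hmono g : lt 0 g -> val_gt (hmono g) 0.
Proof. by move=> g_gt0 y; rewrite /hmono; case: eqP => // ->. Qed.

Lemma hahn_val a : hahn a -> a <> hzero -> exists g, is_val a g.
Proof.
move=> ha a_neq0; have [x ax] : exists x, a x <> 0.
  apply: contrapT => a0; apply: a_neq0; apply/funext => x.
  by apply: contrapT => ax; apply: a0; exists x.
by have [m am minm] := ha (supp a) (fun _ h => h) (ex_intro _ x ax); exists m.
Qed.

Lemma is_val_uniq a g h : is_val a g -> is_val a h -> g = h.
Proof. by move=> [ag ming] [ah minh]; apply: (gle_anti HG); [apply: ming | apply: minh].
Qed.

Lemma is_val_gt f p q : is_val f p -> lt q p -> val_gt f q.
Proof. by move=> [_ minf] qp y /minf; apply: glt_le_trans. Qed.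

Lemma val_gtW f q : val_gt f q -> val_ge f q.
Proof. by move=> fq y /fq /gltW. Qed.

Lemma val_gt_le f q q' : le q q' -> val_gt f q' -> val_gt f q.
Proof. by move=> qq' fq y /fq; apply: gle_lt_trans. Qed.

Lemma val_gtD a b q : val_gt a q -> val_gt b q -> val_gt (hadd a b) q.
Proof.
move=> aq bq y; rewrite /hadd; have [a0 ab|/eqP a0 _] := eqVneq (a y) 0; last exact: aq.
by apply: bq => b0; apply: ab; rewrite a0 b0 addr0.
Qed.

Lemma val_gtN a q : val_gt a q -> val_gt (hopp a) q.
Proof. by move=> aq y a0; apply: aq => ay; apply: a0; rewrite /hopp ay oppr0. Qed.

Lemma val_gtB a b q : val_gt a q -> val_gt b q -> val_gt (hadd a (hopp b)) q.
Proof. by move=> aq /val_gtN; apply: val_gtD. Qed.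

Lemma val_gt_shift f q d : val_gt (hshift f d) q <-> val_gt f (q - d).
Proof.
split=> fq y; last by rewrite /hshift -(glt_add2r HG (- d)) => /fq.
by move=> fy; rewrite -(glt_add2r HG d) subrK; apply: fq; rewrite /hshift addrK.
Qed.

Lemma is_valD a b p : val_gt a p -> is_val b p -> is_val (hadd a b) p.
Proof.
move=> ap [bp minb]; have a0 : a p = 0.
  by apply: contrapT => /ap /glt_irr.
split; first by rewrite /hadd a0 add0r.
move=> y; rewrite /hadd; have [ay ab|/eqP ay _] := eqVneq (a y) 0; last exact/gltW/ap.
by apply: minb => by0; apply: ab; rewrite ay by0 addr0.
Qed.

Lemma is_valN a p : is_val a p -> is_val (hopp a) p.
Proof.
move=> [ap mina]; split; first by move=> /eqP; rewrite oppr_eq0 => /eqP.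
by move=> y ay; apply: mina => a0; apply: ay; rewrite /hopp a0 oppr0.
Qed.

Lemma is_val_shift f p d : is_val f p -> is_val (hshift f d) (p + d).
Proof.
move=> [fp minf]; split=> [|y /minf]; first by rewrite /hshift addrK.
by rewrite /hshift -(gle_add2r HG d) subrK.
Qed.

Lemma hmul_hmonol g f : hmul (hmono g) f = hshift f g.
Proof.
apply/funext => y; rewrite /hmul -(fsbig_widen [set g] (supp (hmono g))).
- by rewrite fsbig_set1 /hmono eqxx mul1r.
- by move=> x ->; rewrite /supp /hmono /= eqxx; apply/eqP; apply: oner_neq0.
- by move=> x []; rewrite /supp /hmono /=; case: eqP.
Qed.

Lemma hmul_supp a b y : hmul a b y <> 0 -> exists h, a h <> 0 /\ b (y - h) <> 0.
Proof.
move=> ab; apply: contrapT => nab; apply: ab; apply: fsbig1 => h ah.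
have [->|/eqP bh] := eqVneq (b (y - h)) 0; first by rewrite mulr0.
by case: nab; exists h.
Qed.

Lemma is_valM a b g h : is_val a g -> is_val b h -> is_val (hmul a b) (g + h).
Proof.
move=> [ag mina] [bh minb]; split.
  rewrite /hmul -(fsbig_widen [set g] (supp a)) => [|x -> //|x [ax /= xg]].
    by rewrite fsbig_set1 (addrC g) addrK; apply/eqP; rewrite mulf_neq0 //; apply/eqP.
  have gx : lt g x by split; [apply: mina | move=> gx; apply: xg].
  suff -> : b (g + h - x) = 0 by rewrite mulr0.
  apply: contrapT => /minb; apply: (glt_nge HG).
  by rewrite -(glt_add2r HG x) subrK addrC glt_add2l.
move=> y /hmul_supp [x [/mina gx /minb hyx]].
apply: (gle_trans HG (y := x + h)); first by rewrite gle_add2r.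
by rewrite -(gle_add2l HG (- x)) addKr addrC.
Qed.

Lemma no_const_termD s s' : no_const_term s -> no_const_term s' ->
  no_const_term (hadd s s').
Proof. by move=> [hs s0] [hs' s0']; split; [apply: hahnD | rewrite /hadd s0 s0' addr0]. Qed.

Lemma no_const_termB s s' : no_const_term s -> no_const_term s' ->
  no_const_term (hadd s (hopp s')).
Proof.
move=> [hs s0] [hs' s0']; split; first exact: hahnD (hahnN _).
by rewrite /hadd /hopp s0 s0' subrr.
Qed.

End HahnSeries.

Section Derivation.
Variables (k : fieldType) (G : zmodType) (le : rel G) (HG : ordered_abelian_group le).
Variable D : (G -> k) -> G -> k.
Hypotheses (Hder : derivation le D) (Hcst : constants_are_k le D).
Hypothesis Hdv : differential_valuation le D.
Local Notation lt := (glt le).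
Local Notation hahn := (hahn le).
Local Notation is_val := (is_val le).
Local Notation val_gt := (val_gt le).
Local Notation val_ge := (val_ge le).
Local Notation no_const_term := (no_const_term le).
Local Notation hzero := (@hzero k G).
Local Notation hmono := (@hmono k G).
Local Notation dval g := (is_val (D (hmono g))).
Implicit Types (a s x : G -> k).

Lemma der_hahn a : hahn a -> hahn (D a). Proof. exact: Hder.1. Qed.

Lemma derD a b : hahn a -> hahn b -> D (hadd a b) = hadd (D a) (D b).
Proof. exact: Hder.2.1. Qed.

Lemma derM a b : hahn a -> hahn b ->
  D (hmul a b) = hadd (hmul a (D b)) (hmul b (D a)).
Proof. exact: Hder.2.2. Qed.

Lemma derC c : D (hconst c) = hzero.
Proof. by apply/(Hcst (hahnC HG (c := c))); exists c. Qed.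

Lemma der0 : D hzero = hzero.
Proof.
suff {1}-> : hzero = hconst 0 by apply: derC.
by apply/funext => y; rewrite /hconst /hzero; case: eqP.
Qed.

Lemma derB a b : hahn a -> hahn b -> D (hadd a (hopp b)) = hadd (D a) (hopp (D b)).
Proof.
move=> ha hb; rewrite derD //; last exact: hahnN.
congr (hadd _ _); apply/funext => y.
have := congr1 (fun f => f y) (derD hb (hahnN hb)).
have -> : hadd b (hopp b) = hzero by apply/funext => z; rewrite /hadd /hopp subrr.
by rewrite der0 /hadd /hopp /hzero => /esym /addr0_eq ->.
Qed.

Lemma der_hmonoD g h :
  D (hmono (g + h)) = hadd (hshift (D (hmono h)) g) (hshift (D (hmono g)) h).
Proof.
have -> : hmono (g + h) = hmul (hmono g) (hmono h).
  by rewrite hmul_hmonol; apply/funext => y; rewrite /hshift /hmono subr_eq addrC.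
rewrite derM; [by rewrite !hmul_hmonol | apply: (hahn_hmono HG)..].
Qed.

Lemma der_hmono0 : D (hmono 0) = hzero.
Proof. by rewrite hmono0 derC. Qed.

Lemma dval_exists g : g != 0 -> exists p, dval g p.
Proof.
move=> g0; apply: (hahn_val (der_hahn (hahn_hmono HG (g := g)))).
move=> /(Hcst (hahn_hmono HG (g := g))) [c /(congr1 (fun f => f g))].
by rewrite /hmono /hconst eqxx (negbTE g0) => /eqP; rewrite oner_eq0.
Qed.

Lemma dval_neq0 g p : dval g p -> g != 0.
Proof. by apply: contraPneq => -> [+ _]; rewrite der_hmono0. Qed.

(* Differentiating [t^g t^-g = 1] gives [D t^g = - t^(2g) D t^-g]. *)
Lemma dvalN g q : dval (- g) q -> dval g (q + (g + g)).
Proof.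
move=> gq; have -> : D (hmono g) = hopp (hshift (D (hmono (- g))) (g + g)).
  apply/funext => y; have := congr1 (fun f => f (y - g)) (der_hmonoD g (- g)).
  rewrite subrr der_hmono0 /hadd /hshift /hopp /hzero opprK subrK => /esym /eqP.
  by rewrite addr_eq0 opprD addrA => /eqP ->; rewrite opprK.
exact/is_valN/is_val_shift.
Qed.

Lemma val_gt_der_nonneg a g p : hahn a -> val_ge a 0 -> dval g p -> val_gt (D a) (p - g).
Proof.
move=> ha a_ge0; suff pos h q : lt 0 h -> dval h q -> val_gt (D a) (q - h).
  move=> gp; case: (gneq0_lt0 HG (dval_neq0 gp)) => [/pos/(_ gp) //|/pos ng_gt0].
  have [q gq] : exists q, dval (- g) q.
    by apply: dval_exists; rewrite oppr_eq0 (dval_neq0 gp).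
  by have := ng_gt0 _ gq; rewrite (is_val_uniq HG gp (dvalN gq)) opprK addrA addrK.
move=> h_gt0 hq.
have := Hdv.2 a _ ha (hahn_hmono HG (g := h)) a_ge0 (val_gt_hmono h_gt0)
  (@hmono_neq0 _ _ h) _ hq.
by rewrite hmul_hmonol => /(val_gt_shift HG).
Qed.

Lemma dval_lt g h p : lt g h -> dval g p -> val_gt (D (hmono h)) p.
Proof.
move=> gh gp; have e_gt0 : lt 0 (h - g) by rewrite -glt_subr0.
have -> : h = g + (h - g) by rewrite addrC subrK.
rewrite der_hmonoD; apply: val_gtD.
  apply/(val_gt_shift HG)/val_gt_der_nonneg => //; first exact: (hahn_hmono HG).
  exact/val_gtW/val_gt_hmono.
exact: (is_val_gt HG (is_val_shift HG _ gp) (gltr_addl HG _ e_gt0)).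
Qed.

Lemma dval_le g h pg ph : le g h -> dval g pg -> dval h ph -> le pg ph.
Proof.
move=> gh gp hp; have [eq_gh|/eqP hg] := eqVneq g h.
  by subst h; rewrite (is_val_uniq HG gp hp) gle_refl.
by case: hp => + _ => /(dval_lt (conj gh hg) gp) /gltW.
Qed.

(* Write [x = t^g u] with [v u = 0]: in [D x = t^g D u + u D t^g] the second term has
   valuation [v (D t^g)] and the first is strictly larger by the differential-valuation
   axiom. *)
Lemma is_val_der x g p : hahn x -> is_val x g -> dval g p -> is_val (D x) p.
Proof.
move=> hx xg gp; pose u := hshift x (- g).
have hu : hahn u by exact: hahn_shift.
have u0 : is_val u 0 by rewrite -(subrr g); exact: is_val_shift.
have -> : x = hmul (hmono g) u.
  by rewrite hmul_hmonol; apply/funext => y; rewrite /u /hshift opprK subrK.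
rewrite derM ?hmul_hmonol //; last exact: (hahn_hmono HG).
apply: is_valD.
  by apply/(val_gt_shift HG)/val_gt_der_nonneg => //; case: u0.
by rewrite -[p]add0r; apply: is_valM.
Qed.

Lemma val_der_noconst x : no_const_term x -> x <> hzero ->
  exists g p, [/\ is_val x g, dval g p & is_val (D x) p].
Proof.
move=> [hx x0] /(hahn_val hx) [g xg]; have g0 : g != 0.
  by apply: contraPneq x0 => <-; case: xg.
by have [p gp] := dval_exists g0; exists g, p; split=> //; apply: is_val_der gp.
Qed.

Lemma val_gt_der_noconst x g p : no_const_term x -> dval g p ->
  val_gt (D x) p <-> forall h, le h g -> x h = 0.
Proof.
move=> Sx gp; have [->|xn] := pselect (x = hzero); first by rewrite der0.
have [g1 [p1 [xg1 g1p1 Dxp1]]] := val_der_noconst Sx xn.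
split=> [Dxp h hg|xg].
  apply: contrapT => /(proj2 xg1 h) g1h.
  exact: (glt_nge HG (Dxp _ Dxp1.1) (dval_le (gle_trans HG g1h hg) g1p1 gp)).
have gg1 : lt g g1 by apply: (gnge_lt HG) => g1g; case: xg1 => + _; rewrite xg.
apply: (is_val_gt HG Dxp1).
by case: g1p1 => + _ => /(dval_lt gg1 gp).
Qed.

Lemma der_inj_noconst s s' : no_const_term s -> no_const_term s' -> D s = D s' ->
  s = s'.
Proof.
move=> Ss Ss' Dss'; have Sx := no_const_termB HG Ss Ss'.
have [x0|/(val_der_noconst Sx) [g [p [_ _ []]]]] := pselect (hadd s (hopp s') = hzero).
  apply/funext => y; have /eqP := congr1 (fun f => f y) x0.
  by rewrite subr_eq0 => /eqP.
rewrite derB ?Dss'; [by rewrite /hadd /hopp subrr | exact: Ss.1 | exact: Ss'.1].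
Qed.

Hypothesis Hai : asymptotic_integration le D.

(* Subtracting its constant term moves the asymptotic integral into [S]. *)
Lemma asymptotic_integral r beta : hahn r -> is_val r beta ->
  exists a g, [/\ no_const_term a, dval g beta & val_gt (hadd r (hopp (D a))) beta].
Proof.
move=> hr rbeta; have rn : r <> hzero by move=> r0; case: rbeta; rewrite r0.
have [a ha /(_ beta rbeta) abeta] := Hai hr rn.
pose a' := hadd a (hconst (- a 0)).
have Sa' : no_const_term a'.
  split; first exact: (hahnD HG ha (hahnC HG (c := - a 0))).
  by rewrite /a' /hadd /hconst eqxx subrr.
have Da' : D a' = D a.
  rewrite derD ?derC; [|exact: ha|exact: (hahnC HG (c := - a 0))].
  by apply/funext => y; rewrite /hadd /hzero addr0.
have Dabeta : is_val (D a) beta.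
  have -> : D a = hadd (hopp (hadd r (hopp (D a)))) r.
    by apply/funext => y; rewrite /hadd /hopp; ring.
  exact: is_valD (val_gtN abeta) rbeta.
have a'n : a' <> hzero by move=> a'0; case: Dabeta; rewrite -Da' a'0 der0.
have [g [p [_ gp Da'p]]] := val_der_noconst Sa' a'n.
have pbeta : p = beta by apply: (is_val_uniq HG Da'p); rewrite Da'.
by exists a', g; split=> //; [rewrite -pbeta | rewrite Da'].
Qed.

Section Solution.
Variable b : G -> k.
Hypothesis hb : hahn b.

Definition residual s : G -> k := hadd b (hopp (D s)).

Definition accurate s g : Prop := forall p, dval g p -> val_gt (residual s) p.

Lemma hahn_residual s : hahn s -> hahn (residual s).
Proof. by move=> hs; apply: (hahnD HG hb (hahnN (der_hahn hs))). Qed.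

Lemma accurate_le s g h : g != 0 -> le h g -> accurate s g -> accurate s h.
Proof.
move=> g0 hg sg ph hph; have [pg gpg] := dval_exists g0.
exact: (val_gt_le HG (dval_le hg hph gpg) (sg _ gpg)).
Qed.

Lemma accurate_coef s s' g : no_const_term s -> no_const_term s' -> g != 0 ->
  accurate s g -> accurate s' g -> forall h, le h g -> s h = s' h.
Proof.
move=> Ss Ss' g0 sg s'g h hg; have [p gp] := dval_exists g0.
suff /(_ h hg) /eqP : forall h, le h g -> hadd s (hopp s') h = 0.
  by rewrite subr_eq0 => /eqP.
apply/(val_gt_der_noconst (no_const_termB HG Ss Ss') gp).
have -> : D (hadd s (hopp s')) = hadd (residual s') (hopp (residual s)).
  rewrite derB; [|exact: Ss.1|exact: Ss'.1].
  by apply/funext => y; rewrite /residual /hadd /hopp; ring.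
exact: (val_gtB (s'g _ gp) (sg _ gp)).
Qed.

(* The coefficient at [h] of any element of [S] accurate at [h]; by [accurate_coef] these
   approximations are coherent. *)
Definition sol : G -> k := fun h =>
  if pselect (exists s, no_const_term s /\ accurate s h) is left e then sval (cid e) h
  else 0.

Lemma sol_coef s g h : no_const_term s -> g != 0 -> accurate s g -> le h g -> sol h = s h.
Proof.
move=> Ss g0 sg hg; rewrite /sol; case: pselect => [e|]; last first.
  by case; exists s; split=> //; apply: accurate_le sg.
case: (svalP (cid e)); set s' := sval _ => Ss' s'h.
have [->|h0] := eqVneq h 0; first by rewrite Ss.2 Ss'.2.
exact: accurate_coef Ss' Ss h0 s'h (accurate_le g0 hg sg) _ (gle_refl HG h).
Qed.

Lemma sol_neq0 h : sol h <> 0 -> exists s, [/\ no_const_term s, accurate s h & sol h = s h].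
Proof.
rewrite /sol; case: pselect => // e _; exists (sval (cid e)).
by case: (svalP (cid e)) => Ss sh; split.
Qed.

Lemma no_const_term_sol : no_const_term sol.
Proof.
split; last first.
  by rewrite /sol; case: pselect => // e; case: (svalP (cid e)) => -[].
move=> B Bsol [g Bg]; have [s [[hs s0] sg sgE]] := sol_neq0 (Bsol _ Bg).
have g0 : g != 0 by apply/eqP => g0; apply: (Bsol _ Bg); rewrite sgE g0.
have [m [Bm mg] minm] : exists2 m, (B `&` [set y | le y g]) m &
    forall y, (B `&` [set y | le y g]) y -> le m y.
  apply: (hs); last by exists g; split=> //; apply: gle_refl.
  by move=> y [By yg]; rewrite /supp /= -(sol_coef (conj hs s0) g0 sg yg); apply: Bsol.
exists m => // y By; case: (gle_total HG y g) => yg; first exact: minm.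
exact: (gle_trans HG mg yg).
Qed.

Lemma accurate_sol s g : no_const_term s -> accurate s g -> accurate sol g.
Proof.
move=> Ss sg p gp; have g0 := dval_neq0 gp.
have Sx := no_const_termB HG no_const_term_sol Ss.
have -> : residual sol = hadd (residual s) (hopp (D (hadd sol (hopp s)))).
  rewrite derB; [|exact: no_const_term_sol.1|exact: Ss.1].
  by apply/funext => y; rewrite /residual /hadd /hopp; ring.
apply: val_gtB (sg _ gp) _; apply/(val_gt_der_noconst Sx gp) => h hg.
by rewrite /hadd /hopp (sol_coef Ss g0 sg hg) subrr.
Qed.

Lemma der_sol : D sol = b.
Proof.
have [hsol _] := no_const_term_sol; have hr := hahn_residual hsol.
suff r0 : residual sol = hzero.
  apply/funext => y; have /eqP := congr1 (fun f => f y) r0.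
  by rewrite /residual /hadd /hopp /hzero subr_eq0 => /eqP.
apply: contrapT => /(hahn_val hr) [beta rbeta].
have [a [g [Sa gbeta abeta]]] := asymptotic_integral hr rbeta.
have : accurate (hadd sol a) g.
  move=> q /(is_val_uniq HG gbeta) <-.
  suff -> : residual (hadd sol a) = hadd (residual sol) (hopp (D a)) by [].
  rewrite /residual derD; [|exact: hsol|exact: Sa.1].
  by apply/funext => y; rewrite /hadd /hopp; ring.
move=> /(accurate_sol (no_const_termD HG no_const_term_sol Sa)) /(_ _ gbeta).
by case: rbeta => + _ => /[swap] /[apply] /glt_irr.
Qed.

End Solution.

End Derivation.

Theorem mainTheorem7 (k : fieldType) (G : zmodType) (le : rel G)
  (HG : ordered_abelian_group le) (D : (G -> k) -> (G -> k)) :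
  derivation le D ->
  constants_are_k le D ->
  differential_valuation le D ->
  asymptotic_integration le D ->
  forall b : G -> k, hahn le b ->
    exists! s : G -> k, no_const_term le s /\ D s = b.
Proof.
move=> Hder Hcst Hdv Hai b hb.
have Ssol := no_const_term_sol HG Hder Hcst Hdv b.
have Dsol := der_sol HG Hder Hcst Hdv Hai hb.
exists (sol le D b); split=> // s [Ss Dsb].
by apply: (der_inj_noconst HG Hder Hcst Hdv Ssol Ss); rewrite Dsol Dsb.
Qed.
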